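(* Let $k_1,k_2$ be positive integers with $k_1\ge k_2\ge 2$, and let $D$ be a digraph that has a Hamiltonian directed path and contains no subdivision of $C(k_1,k_2)$ as a subdigraph. Then $\chi(D)\le 3k_1$.
   Context: Digraphs are orientations of finite simple graphs (no loops, no multiple arcs, no pair of opposite arcs). The chromatic number $\chi(D)$ of a digraph is the chromatic number of its underlying undirected graph. For positive integers $k_1,k_2$, the two-blocks cycle $C(k_1,k_2)$ is the oriented cycle formed by two internally disjoint directed paths from a vertex $x$ to a vertex $y$, of lengths $k_1$ and $k_2$. A subdivision of a digraph $H$ is a digraph obtained from $H$ by replacing each arc $(u,v)$ by a directed $uv$-path of length at least $1$ (internally disjoint new paths). A Hamiltonian directed path is a directed path passing through all vertices. *)

From mathcomp Require Import all_boot.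
Set Implicit Arguments. Unset Strict Implicit. Unset Printing Implicit Defensive.

Definition digraph (T : finType) (A : rel T) : Prop :=
  (forall u, ~~ A u u) /\ (forall u v, A u v -> ~~ A v u).

Definition colorableb (T : finType) (A : rel T) (k : nat) : bool :=
  [exists f : {ffun T -> 'I_k}, [forall u, forall v, A u v ==> (f u != f v)]].

Lemma colorable_card (T : finType) (A : rel T) (irrA : forall u, ~~ A u u) :
  exists k, colorableb A k.
Proof.
exists #|T|; apply/existsP; exists [ffun x => enum_rank x].
apply/forallP => u; apply/forallP => v; apply/implyP => Auv.
rewrite !ffunE; apply/negP => /eqP /enum_rank_inj Euv.
by subst v; move: (irrA u); rewrite Auv.
Qed.

Definition chromatic_number (T : finType) (A : rel T)
  (irrA : forall u, ~~ A u u) : nat := ex_minn (colorable_card irrA).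

(* The sequence x :: p is a directed path (distinct vertices, consecutive arcs);
   its length (number of arcs) is size p and it goes from x to last x p. *)
Definition dipath (T : finType) (A : rel T) (x : T) (p : seq T) : bool :=
  path A x p && uniq (x :: p).

Definition has_hamiltonian_dipath (T : finType) (A : rel T) : Prop :=
  exists x p, dipath A x p /\ forall v, v \in x :: p.

(* D contains a subdivision of the two-blocks cycle C(k1,k2) as a subdigraph:
   a subdivision of C(k1,k2) is exactly the union of two internally disjoint
   directed x-y paths of lengths at least k1 and k2 respectively. *)
Definition has_subdiv_two_blocks (T : finType) (A : rel T) (k1 k2 : nat) : Prop :=
  exists x y p1 p2,
    [/\ dipath A x p1 /\ dipath A x p2,
        last x p1 = y /\ last x p2 = y,
        k1 <= size p1, k2 <= size p2 &
        (forall v, v \in x :: p1 -> v \in x :: p2 -> v = x \/ v = y)].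

From mathcomp Require Import all_boot zify.
From Stdlib Require Import Classical.
Set Implicit Arguments. Unset Strict Implicit. Unset Printing Implicit Defensive.

(* Number the vertices 0, ..., n along the Hamiltonian path and split them into
   the k1 residue classes of their positions modulo k1.  Two arcs joining
   positions i < k and j < l of one class with i < j < k < l would, together with
   the stretches i..j and k..l of the Hamiltonian path (each of length at least
   k1), form a subdivision of C(k1,k2) for every orientation of the two arcs.  So
   inside each class the arcs, drawn above a line, do not cross: the class
   induces an outerplanar graph, which has a vertex with at most one neighbour on
   each side and is therefore 3-colourable.  Pairing the class with such a colour
   gives 3k1 colours. *)

Lemma chromatic_number_le (T : finType) (A : rel T) (irrA : forall u, ~~ A u u) k :
  colorableb A k -> chromatic_number irrA <= k.
Proof. by move=> colA; rewrite /chromatic_number; case: ex_minnP => m _; apply. Qed.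

Lemma colorable_pair (T : finType) (A : rel T) k m (g : T -> 'I_k) (h : T -> 'I_m) :
  (forall u v, A u v -> (g u, h u) != (g v, h v)) -> colorableb A (k * m).
Proof.
move=> gh_proper; have cardE : #|{: 'I_k * 'I_m}| = k * m by rewrite card_prod !card_ord.
apply/existsP; exists [ffun u => cast_ord cardE (enum_rank (g u, h u))].
apply/forallP => u; apply/forallP => v; apply/implyP => Auv.
by rewrite !ffunE (inj_eq (@cast_ord_inj _ _ _)) (inj_eq enum_rank_inj) gh_proper.
Qed.

Lemma exists_ord3_avoiding (a b : 'I_3) : exists c : 'I_3, (c != a) && (c != b).
Proof.
have /existsP[c] : [exists c : 'I_3, c \notin [:: a; b]].
  apply: contraT => /existsPn ab_all.
  have /subset_leq_card : 'I_3 \subset [:: a; b].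
    by apply/subsetP => c _; apply/negPn/ab_all.
  by rewrite card_ord => /leq_trans/(_ (card_size _)).
by rewrite !inE negb_or; exists c.
Qed.

Lemma at_most_one_in_singleton (T : Type) (x0 : T) (Q : T -> Prop) :
  (forall t1 t2, Q t1 -> Q t2 -> t1 = t2) -> exists a, forall t, Q t -> t = a.
Proof.
move=> Q_uniq; case: (classic (exists a, Q a)) => [[a Qa] | noQ].
  by exists a => t Qt; apply: Q_uniq.
by exists x0 => t Qt; case: noQ; exists t.
Qed.

Section CrossingFreeGraphs.
Variable E : rel nat.
Hypothesis Esym : symmetric E.
Hypothesis Eirr : irreflexive E.

Definition crossing_free (V : seq nat) := forall i j k l,
  i \in V -> j \in V -> k \in V -> l \in V ->
  i < j -> j < k -> k < l -> E i k -> E j l -> False.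

Definition between x y u := (x < u < y) || (y < u < x).

Definition spans (V : seq nat) x y := exists2 u, u \in V & between x y u.

Definition short_edged (V : seq nat) z := forall t, t \in V -> E z t -> ~ spans V z t.

Lemma edge_neq x y : E x y -> x != y.
Proof. by apply: contraTneq => ->; rewrite Eirr. Qed.

Lemma spansC V x y : spans V x y -> spans V y x.
Proof. by case=> u uV; exists u; rewrite // /between orbC. Qed.

Lemma not_short_edgedP V z :
  ~ short_edged V z -> exists t, [/\ t \in V, E z t & spans V z t].
Proof.
move=> not_short; apply: NNPP => none; apply: not_short => t tV Ezt sp.
by apply: none; exists t.
Qed.

Lemma short_edged_degree_le2 V z : short_edged V z ->
  exists a b, forall t, t \in V -> E z t -> t = a \/ t = b.
Proof.
move=> zshort.
have not_between t1 t2 : t1 \in V -> t2 \in V -> E z t2 -> ~~ between z t2 t1.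
  by move=> V1 V2 E2; apply/negP => t1_between; apply: (zshort t2 V2 E2); exists t1.
have same_side t1 t2 : t1 \in V -> t2 \in V -> E z t1 -> E z t2 ->
    (t1 < z) && (t2 < z) || (z < t1) && (z < t2) -> t1 = t2.
  move=> V1 V2 E1 E2; have := not_between t1 t2 V1 V2 E2.
  by have := not_between t2 t1 V2 V1 E1; rewrite /between; lia.
have [a Ha] : exists a, forall t, [/\ t \in V, E z t & t < z] -> t = a.
  apply: (at_most_one_in_singleton 0) => t1 t2 [V1 E1 lt1] [V2 E2 lt2].
  by apply: same_side => //; rewrite lt1 lt2.
have [b Hb] : exists b, forall t, [/\ t \in V, E z t & z < t] -> t = b.
  apply: (at_most_one_in_singleton 0) => t1 t2 [V1 E1 lt1] [V2 E2 lt2].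
  by apply: same_side => //; rewrite lt1 lt2 orbT.
exists a, b => t tV Ezt; have := edge_neq Ezt.
by case: (ltngtP t z) => // tz _; [left; apply: Ha | right; apply: Hb].
Qed.

Section Drawing.
Variable V : seq nat.
Hypothesis cfV : crossing_free V.

Lemma nbr_within x y u t : x \in V -> y \in V -> u \in V -> t \in V ->
  x < u < y -> E x y -> E u t -> x <= t <= y.
Proof.
move=> xV yV uV tV /andP[xu uy] Exy Eut.
apply/andP; split; rewrite leqNgt; apply/negP => ?.
  by apply: (cfV tV xV uV yV) => //; rewrite Esym.
exact: (cfV xV uV yV tV).
Qed.

(* A shortest edge passing over a vertex u of V traps every edge at u between its
   ends, so u is short-edged. *)
Lemma spanning_edge_short_edged x y : x \in V -> y \in V -> E x y -> spans V x y ->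
  exists2 z, z \in V & short_edged V z.
Proof.
have [d] := ubnP (maxn x y - minn x y); elim: d x y => // d IH x y.
wlog xy : x y / x < y => [wlog_xy | dxy xV yV Exy [u uV]].
  move=> dxy xV yV Exy sp; have := edge_neq Exy.
  case: (ltngtP x y) => // yx _; first exact: (wlog_xy x y).
  by apply: (wlog_xy y x); rewrite 1?Esym 1?maxnC 1?minnC //; apply: spansC.
move=> u_between; have xuy : x < u < y by move: u_between; rewrite /between; lia.
case: (classic (short_edged V u)) => [|/not_short_edgedP[t [tV Eut sp]]].
  by exists u.
have := nbr_within xV yV uV tV xuy Exy Eut.
by move=> xty; apply: (IH u t) => //; lia.
Qed.

Lemma exists_short_edged z0 : z0 \in V -> exists2 z, z \in V & short_edged V z.
Proof.
move=> z0V; case: (classic (short_edged V z0)) => [|/not_short_edgedP[t [tV Ezt sp]]].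
  by exists z0.
exact: (spanning_edge_short_edged z0V tV Ezt sp).
Qed.

End Drawing.

Lemma crossing_free_sub V V' : {subset V' <= V} -> crossing_free V -> crossing_free V'.
Proof. by move=> sub cf i j k l /sub ? /sub ? /sub ? /sub ?; apply: cf. Qed.

Lemma crossing_free_3colorable V : crossing_free V ->
  exists f : nat -> 'I_3, {in V &, forall i j, E i j -> f i != f j}.
Proof.
have [m] := ubnP (size V); elim: m V => // m IH V; rewrite ltnS => sizeV cfV.
case: V => [|z0 V0] in sizeV cfV *; first by exists (fun=> ord0).
set V := z0 :: V0 in sizeV cfV *.
have [z zV zshort] := exists_short_edged cfV (mem_head z0 V0).
have [a [b zab]] := short_edged_degree_le2 zshort.
have [f f_proper] : exists f : nat -> 'I_3, {in rem z V &, forall i j, E i j -> f i != f j}.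
  by apply: IH; [rewrite size_rem | apply: crossing_free_sub cfV; apply: mem_rem].
have [c /andP[ca cb]] := exists_ord3_avoiding (f a) (f b).
exists (fun i => if i == z then c else f i) => i j iV jV /=.
have [-> | iz] := eqVneq i z; have [-> | jz] := eqVneq j z.
- by rewrite Eirr.
- by move=> /(zab j jV) [->|->].
- by rewrite Esym eq_sym => /(zab i iV) [->|->].
- by move=> Eij; apply: f_proper; rewrite ?rem_mem.
Qed.

End CrossingFreeGraphs.

Definition adjacent (T : finType) (A : rel T) u v := A u v || A v u.

Definition segment i j := iota i.+1 (j - i).

Lemma mem_segment i j t : (t \in segment i j) = (i < t <= j).
Proof. by rewrite mem_iota; apply/idP/idP; lia. Qed.

Lemma size_segment i j : size (segment i j) = j - i.
Proof. exact: size_iota. Qed.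

Lemma segment_uniq i j : uniq (segment i j).
Proof. exact: iota_uniq. Qed.

Lemma last_segment i j : i <= j -> last i (segment i j) = j.
Proof.
move=> le_ij; rewrite /segment -[RHS](subnKC le_ij); move: (j - i) => d {j le_ij}.
by elim: d i => [|d IH] i /=; rewrite ?addn0 // IH addSnnS.
Qed.

Lemma path_segment (e : rel nat) i j : (forall t, e t t.+1) -> path e i (segment i j).
Proof.
move=> e_succ; rewrite /segment; move: (j - i) => d {j}.
by elim: d i => //= d IH i; rewrite e_succ IH.
Qed.

Lemma modn_eq_leq_sub k m n : m < n -> m = n %[mod k] -> k <= n - m.
Proof.
move=> lt_mn eq_mn; apply: dvdn_leq; first by rewrite subn_gt0.
by rewrite -eqn_mod_dvd ?eq_mn // ltnW.
Qed.

Definition residue_class n k r := [seq i <- iota 0 n | i %% k == r].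

Lemma mem_residue_class n k r i : (i \in residue_class n k r) = (i < n) && (i %% k == r).
Proof. by rewrite mem_filter mem_iota andbC. Qed.

Section HamiltonianPath.
Variables (T : finType) (A : rel T) (x : T) (p : seq T).
Hypothesis x_p_dipath : dipath A x p.

Let S i := nth x (x :: p) i.
Let step i j := (j == i.+1) || A (S i) (S j).

Definition index_dipath a q :=
  [&& all (fun i => i <= size p) (a :: q), path step a q & uniq (a :: q)].

Lemma nth_path_inj i j : i <= size p -> j <= size p -> S i = S j -> i = j.
Proof. by move=> i_le j_le /eqP; rewrite nth_uniq ?(andP x_p_dipath).2 // => /eqP. Qed.

Lemma step_arc i j : A (S i) (S j) -> step i j.
Proof. by move=> Aij; rewrite /step Aij orbT. Qed.

Lemma path_step_segment i j : path step i (segment i j).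
Proof. by apply: path_segment => t; rewrite /step eqxx. Qed.

Lemma dipath_of_index_dipath a q : index_dipath a q -> dipath A (S a) (map S q).
Proof.
move=> /and3P[q_le path_q uniq_q]; apply/andP; split.
  rewrite path_map; apply: (sub_in_path _ q_le path_q) => i j _.
  rewrite unfold_in => j_le; case/orP=> [/eqP j_succ | //].
  by move: j_le; rewrite j_succ; apply: (pathP x (andP x_p_dipath).1).
move/allP: q_le => q_le.
by rewrite -map_cons map_inj_in_uniq // => i j /q_le i_le /q_le j_le; apply: nth_path_inj.
Qed.

Lemma two_blocks_of_index_dipaths k1 k2 a q1 q2 :
  index_dipath a q1 -> index_dipath a q2 -> last a q1 = last a q2 ->
  k1 <= size q1 -> k2 <= size q2 ->
  (forall i, i \in a :: q1 -> i \in a :: q2 -> i = a \/ i = last a q1) ->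
  has_subdiv_two_blocks A k1 k2.
Proof.
move=> dq1 dq2 last_eq k1_le k2_le meet.
exists (S a), (S (last a q1)), (map S q1), (map S q2); split.
- by split; apply: dipath_of_index_dipath.
- by rewrite !last_map last_eq.
- by rewrite size_map.
- by rewrite size_map.
move=> v; rewrite -!map_cons => /mapP[i iq1 ->] /mapP[j jq2 Sij].
have /and3P[/allP q1_le _ _] := dq1; have /and3P[/allP q2_le _ _] := dq2.
have ij := nth_path_inj (q1_le i iq1) (q2_le j jq2) Sij; rewrite -{}ij in jq2.
by case: (meet i iq1 jq2) => ->; [left | right].
Qed.

Lemma index_dipath_segment i j : i <= j <= size p -> index_dipath i (segment i j).
Proof.
move=> /andP[ij j_le]; apply/and3P; split.
- by apply/allP => t; rewrite inE mem_segment /=; lia.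
- exact: path_step_segment.
- by rewrite cons_uniq mem_segment ltnn segment_uniq.
Qed.

Lemma index_dipath_cons a b q : A (S a) (S b) -> a <= size p -> a \notin b :: q ->
  index_dipath b q -> index_dipath a (b :: q).
Proof.
move=> Aab a_le a_notin /and3P[q_le path_q uniq_q]; apply/and3P; split.
- by apply/andP.
- by apply/andP; split; first exact: step_arc.
- by rewrite cons_uniq a_notin.
Qed.

Lemma index_dipath_rcons a q b : A (S (last a q)) (S b) -> b <= size p -> b \notin a :: q ->
  index_dipath a q -> index_dipath a (rcons q b).
Proof.
move=> Ab b_le b_notin /and3P[q_le path_q uniq_q].
rewrite /index_dipath -rcons_cons all_rcons rcons_path rcons_uniq.
by rewrite unfold_in b_le q_le path_q step_arc // b_notin uniq_q.
Qed.

Ltac segment_arith :=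
  try move=> ?;
  rewrite ?last_rcons ?size_rcons /= ?last_segment ?size_segment -?rcons_cons
    ?mem_rcons ?inE ?mem_segment; lia.

Lemma crossing_arcs_two_blocks k1 k2 i j k l :
  k2 <= k1 -> i < j -> j < k -> k < l -> l <= size p -> k1 <= j - i -> k1 <= l - k ->
  adjacent A (S i) (S k) -> adjacent A (S j) (S l) -> has_subdiv_two_blocks A k1 k2.
Proof.
move=> k21 ij jk kl l_le gap_ij gap_kl.
have dipath_ij : index_dipath i (segment i j) by apply: index_dipath_segment; lia.
have dipath_kl : index_dipath k (segment k l) by apply: index_dipath_segment; lia.
have last_ij : last i (segment i j) = j by rewrite last_segment // ltnW.
have last_kl : last k (segment k l) = l by rewrite last_segment // ltnW.
(* In each orientation the two arcs close the segments i..j and k..l into a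
   two-blocks cycle whose source and sink lie among i, j, k, l. *)
case/orP=> [ik|ki] /orP[jl|lj].
- apply: (@two_blocks_of_index_dipaths _ _ i (k :: segment k l) (rcons (segment i j) l));
    try segment_arith.
  + by apply: index_dipath_cons => //; segment_arith.
  + by apply: index_dipath_rcons; rewrite ?last_ij //; segment_arith.
- apply: (@two_blocks_of_index_dipaths _ _ i (rcons (k :: segment k l) j) (segment i j));
    try segment_arith.
  apply: index_dipath_rcons; rewrite /= ?last_kl //; try segment_arith.
  by apply: index_dipath_cons => //; segment_arith.
- apply: (@two_blocks_of_index_dipaths _ _ k (rcons (i :: segment i j) l) (segment k l));
    try segment_arith.
  apply: index_dipath_rcons; rewrite /= ?last_ij //; try segment_arith.
  by apply: index_dipath_cons => //; segment_arith.
- apply: (@two_blocks_of_index_dipaths _ _ k (i :: segment i j) (rcons (segment k l) j));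
    try segment_arith.
  + by apply: index_dipath_cons => //; segment_arith.
  + by apply: index_dipath_rcons; rewrite ?last_kl //; segment_arith.
Qed.

Lemma residue_class_crossing_free k1 k2 r : k2 <= k1 -> ~ has_subdiv_two_blocks A k1 k2 ->
  crossing_free (fun i j => adjacent A (S i) (S j)) (residue_class (size (x :: p)) k1 r).
Proof.
move=> k21 no_sub i j k l; rewrite !mem_residue_class.
move=> /andP[_ /eqP ir] /andP[_ /eqP jr] /andP[_ /eqP kr] /andP[l_le /eqP lr] ij jk kl.
move=> adj_ik adj_jl; apply: no_sub.
by apply: (crossing_arcs_two_blocks k21 ij jk kl l_le) => //; apply: modn_eq_leq_sub;
  rewrite // ?ir ?jr ?kr ?lr.
Qed.

End HamiltonianPath.

Theorem theorem7 (T : finType) (A : rel T) (k1 k2 : nat)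
  (hD : digraph A) (hk : 2 <= k2 <= k1)
  (hham : has_hamiltonian_dipath A)
  (hnosub : ~ has_subdiv_two_blocks A k1 k2) :
  chromatic_number (proj1 hD) <= 3 * k1.
Proof.
have [x [p [x_p_dipath p_all]]] := hham.
have k1_gt0 : 0 < k1 by lia.
have k21 : k2 <= k1 by case/andP: hk.
pose E i j := adjacent A (nth x (x :: p) i) (nth x (x :: p) j).
have Esym : symmetric E by move=> i j; rewrite /E /adjacent orbC.
have Eirr : irreflexive E by move=> i; rewrite /E /adjacent orbb; apply/negbTE/(proj1 hD).
have colour_class (r : 'I_k1) : exists f : nat -> 'I_3,
    {in residue_class (size (x :: p)) k1 r &, forall i j, E i j -> f i != f j}.
  apply: crossing_free_3colorable Esym Eirr _ _.
  exact: (residue_class_crossing_free x_p_dipath k21 hnosub).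
have [F F_proper] := fin_all_exists colour_class.
pose idx v := index v (x :: p).
pose cls v : 'I_k1 := Ordinal (ltn_pmod (idx v) k1_gt0).
rewrite mulnC; apply: chromatic_number_le.
apply: (colorable_pair (g := cls) (h := fun v => F (cls v) (idx v))) => u v Auv.
rewrite xpair_eqE negb_and; have [cls_uv | //] := eqVneq (cls u) (cls v).
rewrite /= cls_uv; apply: F_proper.
- by rewrite mem_residue_class index_mem p_all -cls_uv /=.
- by rewrite mem_residue_class index_mem p_all /=.
- by rewrite /E !nth_index ?p_all // /adjacent Auv.
Qed.
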